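(* There is an absolute constant $C>0$ with the following property. Let $(\Omega,\mu)$ be a metric space, $\mathcal D$ a distribution on $\Omega$, $\tau\ge0$, $\sigma(\mathbf{x},\mathbf{y})=\mathbb{1}[\mu(\mathbf{x},\mathbf{y})\le\tau]$, and $p=\mathbf{P}_{\mathbf{x},\mathbf{y}\text{ iid }\mathcal D}[\mu(\mathbf{x},\mathbf{y})\le\tau]$ with $1/n\le p\le1/2$ (all of these may depend on $n$). Suppose $\Omega$ has a finite $\varepsilon$-net $\mathcal N(\varepsilon)$ such that $\mathbf{P}_{\mathbf{x},\mathbf{y}\text{ iid }\mathcal D}\big[\mu(\mathbf{x},\mathbf{y})\in[\tau-2\varepsilon,\tau+2\varepsilon]\big]=o(n^{-2})$ and $|\mathcal N(\varepsilon)|\le\exp(C\,np\log(1/p))$. Then $$\mathsf{TV}\Big(\mathsf{RGG}(n,\Omega,\mathcal D,\sigma,p),\ \mathsf{G}(n,p)\Big)=1-o(1).$$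
   Context: An $\varepsilon$-net $\mathcal N(\varepsilon)\subseteq\Omega$ is a set such that every point of $\Omega$ is at $\mu$-distance at most $\varepsilon$ from some point of $\mathcal N(\varepsilon)$. $\mathsf{RGG}(n,\Omega,\mathcal D,\sigma,p)$: sample $\mathbf{x}^1,\dots,\mathbf{x}^n$ iid from $\mathcal D$ and join $i,j$ iff $\mu(\mathbf{x}^i,\mathbf{x}^j)\le\tau$. $\mathsf{G}(n,p)$ is Erdős–Rényi. Asymptotics are as $n\to\infty$. *)

From HB Require Import structures.
From mathcomp Require Import all_boot all_order all_algebra.
From mathcomp Require Import all_classical all_reals all_analysis.
From mathcomp Require Import Rstruct Rstruct_topology.
Set Implicit Arguments. Unset Strict Implicit. Unset Printing Implicit Defensive.
Import Order.TTheory GRing.Theory Num.Theory.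
Local Open Scope classical_set_scope.
Local Open Scope ring_scope.

Section Defs.
Variable R : realType.

Definition is_metric (T : Type) (mu : T -> T -> R) : Prop :=
  [/\ (forall x y, 0 <= mu x y),
      (forall x y, mu x y = 0 <-> x = y),
      (forall x y, mu x y = mu y x) &
      (forall x y z, mu x z <= mu x y + mu y z)].

Definition measurable_dist d (T : measurableType d) (mu : T -> T -> R) : Prop :=
  measurable_fun [set: T * T] (fun z : T * T => mu z.1 z.2).

(* N (a finite list of points) is an eps-net of Omega for mu;
   its cardinality is bounded by size N *)
Definition is_eps_net (T : Type) (mu : T -> T -> R) (eps : R) (N : seq T) : Prop :=
  forall x : T, exists y, List.In y N /\ mu x y <= eps.

Definition edge_prob d (T : measurableType d) (D : probability T R)
  (mu : T -> T -> R) (tau : R) : R :=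
  fine ((D \x D)%E [set z : T * T | mu z.1 z.2 <= tau]).

Definition band_prob d (T : measurableType d) (D : probability T R)
  (mu : T -> T -> R) (tau eps : R) : R :=
  fine ((D \x D)%E [set z : T * T | (tau - 2 * eps <= mu z.1 z.2)
                                     && (mu z.1 z.2 <= tau + 2 * eps)]).

Definition iid_sample d d' (T : measurableType d) (Om : measurableType d')
  (P : probability T R) (D : probability Om R) (n : nat)
  (X : 'I_n -> T -> Om) : Prop :=
  [/\ (forall i, measurable_fun setT (X i)),
      (forall i (A : set Om), measurable A -> P (X i @^-1` A) = D A) &
      (forall A : 'I_n -> set Om, (forall i, measurable (A i)) ->
         P (\bigcap_(i in [set: 'I_n]) (X i @^-1` A i))
         = (\prod_(i < n) fine (P (X i @^-1` A i)))%:E)].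

(* Simple graphs on vertex set 'I_n are encoded by their edge sets, i.e.
   sets of 2-element subsets of 'I_n. *)
Definition all_pairs (n : nat) : {set {set 'I_n}} := [set e : {set 'I_n} | #|e| == 2%N]%SET.

Definition rgg_graph (T : Type) (mu : T -> T -> R) (tau : R) (n : nat)
  (x : 'I_n -> T) : {set {set 'I_n}} :=
  [set e : {set 'I_n} | [exists i : 'I_n, exists j : 'I_n,
     [&& (i < j)%N, e == [set i; j]%SET & mu (x i) (x j) <= tau]]]%SET.

Definition rgg_pmf d d' (T : measurableType d) (Om : measurableType d')
  (P : probability T R) (mu : Om -> Om -> R) (tau : R) (n : nat)
  (X : 'I_n -> T -> Om) (g : {set {set 'I_n}}) : R :=
  fine (P [set t | rgg_graph mu tau (fun i => X i t) = g]).

Definition gnp_pmf (n : nat) (p : R) (g : {set {set 'I_n}}) : R :=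
  if g \subset all_pairs n then p ^+ #|g| * (1 - p) ^+ ('C(n, 2) - #|g|)
  else 0.

Definition TV (n : nat) (f h : {set {set 'I_n}} -> R) : R :=
  2^-1 * \sum_(g : {set {set 'I_n}}) `|f g - h g|.

End Defs.
Arguments gnp_pmf {R} n p g.

From HB Require Import structures.
From mathcomp Require Import all_boot all_order all_algebra.
From mathcomp Require Import all_classical all_reals all_analysis.
From mathcomp Require Import Rstruct Rstruct_topology.
From mathcomp Require Import zify ring lra.
Set Implicit Arguments.
Unset Strict Implicit.
Unset Printing Implicit Defensive.
Import Order.TTheory GRing.Theory Num.Theory.
Local Open Scope classical_set_scope.
Local Open Scope ring_scope.

(* If no two sample points have distance within [2 eps] of [tau], which fails
   with probability at most [n^2] times the band probability, then moving every
   point to a nearest point of the [eps]-net does not change the graph.  So up to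
   that error the random geometric graph lives on the at most
   [|N|^n <= exp (C n^2 p ln (1/p))] graphs realised by net points.  Under
   G(n, p), a graph with at least [M p / 4] of the [M = n (n - 1) / 2] possible
   edges has probability at most [exp (- (M p / 4) ln (1/p))], and having fewer
   edges has probability [exp (- Omega (M p))] by Markov's inequality applied to
   [2 ^ - #edges].  With [C = 1/32] both contributions are [O (1/n)], so the two
   laws are asymptotically disjoint. *)

Section TotalVariation.
Variables (R : realType) (I : finType) (f h : I -> R).
Hypotheses (f_ge0 : forall x, 0 <= f x) (h_ge0 : forall x, 0 <= h x).
Hypotheses (f_sum1 : \sum_x f x = 1) (h_sum1 : \sum_x h x = 1).

(* On [S] and on its complement [f - h] has opposite total mass, so each part
   carries half of the l1 distance. *)
Lemma sum_setD_le_half_l1 (S : {set I}) :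
  \sum_(x in S) f x - \sum_(x in S) h x <= 2^-1 * \sum_x `|f x - h x|.
Proof.
have splitS (F : I -> R) : \sum_x F x = \sum_(x in S) F x + \sum_(x | x \notin S) F x.
  by rewrite (bigID (mem S)).
have inS : \sum_(x in S) f x - \sum_(x in S) h x <= \sum_(x in S) `|f x - h x|.
  by rewrite -sumrB ler_sum // => x _; apply: ler_norm.
have outS : \sum_(x | x \notin S) h x - \sum_(x | x \notin S) f x
            <= \sum_(x | x \notin S) `|f x - h x|.
  by rewrite -sumrB ler_sum // => x _; rewrite distrC ler_norm.
move: (splitS f) (splitS h) (splitS (fun x => `|f x - h x|)).
rewrite f_sum1 h_sum1 => ef eh ->; lra.
Qed.

Lemma half_l1_le1 : 2^-1 * \sum_x `|f x - h x| <= 1.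
Proof.
have : \sum_x `|f x - h x| <= \sum_x (f x + h x).
  by apply: ler_sum => x _; apply: le_trans (ler_normB _ _) _; rewrite !ger0_norm.
rewrite big_split /= f_sum1 h_sum1; lra.
Qed.

End TotalVariation.

Section ErdosRenyi.
Variable R : realType.

Lemma sum_subsets_card (T : finType) (A : {set T}) (F : nat -> R) :
  \sum_(g : {set T} | g \subset A) F #|g| = \sum_(k < #|A|.+1) 'C(#|A|, k)%:R * F k.
Proof.
rewrite (partition_big (fun g : {set T} => inord #|g| : 'I_#|A|.+1) xpredT) //.
apply: eq_bigr => k _.
have cardE (g : {set T}) : g \subset A -> (inord #|g| == k :> 'I_#|A|.+1) = (#|g| == k).
  by move=> gA; rewrite -val_eqE [val _]inordK // ltnS subset_leq_card.
rewrite (eq_bigl (mem [set g : {set T} | g \subset A & #|g| == k])); last first.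
  by move=> g; rewrite !inE; case gA: (g \subset A); rewrite //= cardE.
rewrite (eq_bigr (fun _ => F k)); last by move=> g /[!inE] /andP[_ /eqP->].
by rewrite sumr_const cards_draws mulr_natl.
Qed.

Lemma expr_expR_ln (x : R) m : 0 < x -> x ^+ m = expR (m%:R * ln x).
Proof. by move=> x0; rewrite expRM_natl lnK. Qed.

Lemma card_all_pairs n : #|all_pairs n| = 'C(n, 2).
Proof. by rewrite card_draws card_ord. Qed.

Variables (n : nat) (p : R).

Lemma gnp_pmf_ge0 g : 0 <= p <= 1 -> 0 <= gnp_pmf n p g.
Proof.
move=> /andP[p0 p1]; rewrite /gnp_pmf; case: ifP => // _.
by rewrite mulr_ge0 // exprn_ge0 // subr_ge0.
Qed.

Lemma gnp_pmf_gen (w : R) :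
  \sum_(g : {set {set 'I_n}}) gnp_pmf n p g * w ^+ #|g| = (p * w + (1 - p)) ^+ 'C(n, 2).
Proof.
rewrite (bigID (fun g : {set {set 'I_n}} => g \subset all_pairs n)) /=.
rewrite [X in _ + X]big1 ?addr0; last by move=> g /negbTE gA; rewrite /gnp_pmf gA mul0r.
pose F k := (p * w) ^+ k * (1 - p) ^+ ('C(n, 2) - k).
rewrite (eq_bigr (fun g : {set {set 'I_n}} => F #|g|)); last first.
  by move=> g gA; rewrite /gnp_pmf gA /F exprMn mulrAC.
rewrite sum_subsets_card card_all_pairs addrC exprDn.
by apply: eq_bigr => k _; rewrite mulr_natl mulrC.
Qed.

Lemma gnp_pmf_sum1 : \sum_(g : {set {set 'I_n}}) gnp_pmf n p g = 1.
Proof.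
have := gnp_pmf_gen 1; rewrite mulr1 addrC subrK expr1n => <-.
by apply: eq_bigr => g _; rewrite expr1n mulr1.
Qed.

Hypotheses (p_gt0 : 0 < p) (p_le_half : p <= 2^-1).

Let p_le_q : p <= 1 - p. Proof. by move: p_le_half; lra. Qed.
Let q_gt0 : 0 < 1 - p. Proof. by move: p_le_q; lra. Qed.
Let p_unit : 0 <= p <= 1. Proof. by move: p_gt0 q_gt0; lra. Qed.

(* Graphs with at least [k] edges are individually unlikely, and by Markov's
   inequality applied to [2 ^- #|g|], so is having fewer than [k] edges. *)
Lemma gnp_pmf_le_split (k : R) g :
  gnp_pmf n p g <= (1 - p) ^+ 'C(n, 2) * expR (k * ln (p / (1 - p)))
                   + expR (k * ln 2) * (gnp_pmf n p g * 2^-1 ^+ #|g|).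
Proof.
have g_ge0 : 0 <= gnp_pmf n p g by apply: gnp_pmf_ge0.
have heavy_ge0 : 0 <= (1 - p) ^+ 'C(n, 2) * expR (k * ln (p / (1 - p))).
  by rewrite mulr_ge0 ?expR_ge0 // exprn_ge0 // ltW.
have light_ge0 : 0 <= expR (k * ln 2) * (gnp_pmf n p g * 2^-1 ^+ #|g|).
  by rewrite mulr_ge0 ?expR_ge0 // mulr_ge0 // exprn_ge0.
have [gA | /negbTE gA] := boolP (g \subset all_pairs n); last first.
  by rewrite {1}/gnp_pmf gA addr_ge0.
set m := #|g|.
have [km | mk] := leP k m%:R; [apply: ler_wpDr => // | apply: ler_wpDl => //].
  have mM : (m <= 'C(n, 2))%N by rewrite -card_all_pairs subset_leq_card.
  have -> : gnp_pmf n p g = (1 - p) ^+ 'C(n, 2) * (p / (1 - p)) ^+ m.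
    rewrite /gnp_pmf gA -{2}(subnK mM) exprD expr_div_n mulrACA.
    by rewrite mulfV ?mulr1 1?mulrC // expf_neq0 // gt_eqF.
  apply: ler_wpM2l; first by rewrite exprn_ge0 // ltW.
  rewrite expr_expR_ln ?divr_gt0 // ler_expR ler_wnM2r // ln_le0 //.
  by rewrite ler_pdivrMr // mul1r.
rewrite mulrCA -[leLHS]mulr1 ler_wpM2l // exprVn expr_expR_ln //.
rewrite ler_pdivlMr ?expR_gt0 // mul1r ler_expR ler_wpM2r ?ltW //.
by rewrite ln_gt0 // ltr1n.
Qed.

Lemma gnp_set_le (k : R) (S : {set {set {set 'I_n}}}) :
  \sum_(g in S) gnp_pmf n p g <=
    #|S|%:R * ((1 - p) ^+ 'C(n, 2) * expR (k * ln (p / (1 - p))))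
    + expR (k * ln 2) * (1 - p / 2) ^+ 'C(n, 2).
Proof.
apply: le_trans (ler_sum _ (fun g _ => gnp_pmf_le_split k g)) _.
rewrite big_split /= sumr_const mulr_natl lerD2l -mulr_sumr ler_wpM2l ?expR_ge0 //.
have -> : 1 - p / 2 = p * 2^-1 + (1 - p) by field.
rewrite -gnp_pmf_gen [leRHS](bigID (mem S)) /= lerDl sumr_ge0 // => g _.
by rewrite mulr_ge0 ?exprn_ge0 // gnp_pmf_ge0.
Qed.

End ErdosRenyi.

Section Estimates.
Variable R : realType.

Lemma expRN_le_inv (y : R) : 0 < y -> expR (- y) <= y^-1.
Proof.
move=> y0; rewrite expRN lef_pV2 ?posrE ?expR_gt0 //.
by apply: le_trans (expR_ge1Dx y); rewrite lerDr.
Qed.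

Lemma half_le_ln2 : 2^-1 <= ln (2 : R).
Proof.
have := expR_ge1Dx (ln (2^-1 : R)).
by rewrite lnK ?posrE // lnV ?posrE //; lra.
Qed.

Lemma ln2_le1 : ln (2 : R) <= 1.
Proof. by have := @le_ln1Dx R 1; rewrite -[1 + 1]/(2%:R : R); apply; lra. Qed.

Variables (x p : R) (M : nat).
Hypotheses (x_ge2 : 2 <= x) (x2_le_M : x ^+ 2 <= 4 * M%:R).
Hypotheses (inv_x_le_p : x^-1 <= p) (p_le_half : p <= 2^-1).

Let x_gt0 : 0 < x. Proof. by move: x_ge2; lra. Qed.
Let p_gt0 : 0 < p. Proof. by apply: lt_le_trans inv_x_le_p; rewrite invr_gt0. Qed.
Let q_gt0 : 0 < 1 - p. Proof. by move: p_le_half; lra. Qed.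
Let xp_ge1 : 1 <= x * p.
Proof. by rewrite -(mulfV (lt0r_neq0 x_gt0)) ler_wpM2l // ltW. Qed.
Let M_ge0 : 0 <= M%:R :> R. Proof. exact: ler0n. Qed.

(* A graph with at least [M p / 4] edges has probability at most
   [exp (- M p ln (1/p) / 4)], which beats the [exp (x^2 p ln (1/p) / 32)]
   candidate graphs. *)
Lemma heavy_graphs_bound (s : R) :
  0 <= s -> s <= expR (x * (32^-1 * x * p * ln p^-1)) ->
  s * ((1 - p) ^+ M * expR (M%:R * p / 4 * ln (p / (1 - p)))) <= 64 / x.
Proof.
move=> s0 s_le; set L := ln p^-1.
have L_ge : 2^-1 <= L.
  apply: le_trans half_le_ln2 _; rewrite ler_ln ?posrE ?invr_gt0 //.
  by rewrite -[2 : R]invrK lef_pV2 ?posrE ?invr_gt0.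
have lnq_le0 : ln (1 - p) <= 0 by rewrite ln_le0 //; move: p_gt0; lra.
have lnpq : ln (p / (1 - p)) = - L - ln (1 - p).
  by rewrite /L lnM ?posrE ?invr_gt0 // !lnV ?posrE //; lra.
apply: le_trans (ler_wpM2r _ s_le) _.
  by rewrite mulr_ge0 ?expR_ge0 ?exprn_ge0 ?ltW.
rewrite expr_expR_ln // -!exp.expRD.
apply: le_trans (_ : expR (- (x / 64)) <= _); last first.
  by rewrite -[_ / x]invf_div expRN_le_inv // divr_gt0.
rewrite ler_expR lnpq.
have Mq_le0 : M%:R * ln (1 - p) <= 0 by rewrite mulr_ge0_le0.
have heavy_exponent : M%:R * ln (1 - p) + M%:R * p / 4 * (- L - ln (1 - p))
                      <= - (M%:R * p * L / 4).
  have p4 : 0 <= 1 - p / 4 by move: p_le_half; lra.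
  by nra.
have xpL : 2^-1 <= x * p * L by move: (xp_ge1); nra.
have xxpL : x / 2 <= x * x * p * L by move: (x_gt0); nra.
have MpL : x ^+ 2 * (p * L) <= 4 * M%:R * (p * L).
  by apply: ler_wpM2r => //; apply: mulr_ge0; move: (p_gt0) L_ge; lra.
by rewrite expr2 -/L in MpL *; lra.
Qed.

(* [(1 - p / 2) ^ M] is the edge generating function of G(n, p) at [1/2]. *)
Lemma light_graphs_bound :
  expR (M%:R * p / 4 * ln 2) * (1 - p / 2) ^+ M <= 16 / x.
Proof.
rewrite expr_expR_ln; last by move: q_gt0; lra.
rewrite -exp.expRD.
apply: le_trans (_ : expR (- (x / 16)) <= _); last first.
  by rewrite -[_ / x]invf_div expRN_le_inv // divr_gt0.
rewrite ler_expR.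
have lnq : ln (1 - p / 2) <= - (p / 2).
  by have := @le_ln1Dx R (- (p / 2)); rewrite addrC => -> //; move: p_le_half; lra.
have Mp : x / 4 <= M%:R * p.
  by move: x2_le_M (p_gt0) (xp_ge1) (x_gt0); rewrite expr2; nra.
have Mp_ge0 : 0 <= M%:R * p by move: (x_gt0); lra.
have lnM_le : M%:R * ln (1 - p / 2) <= - (M%:R * p / 2) by move: (M_ge0); nra.
by have := ln2_le1; nra.
Qed.

End Estimates.

Definition in_band (R : realType) (Om : Type) (mu : Om -> Om -> R) (tau eps : R)
    (x y : Om) :=
  (tau - 2 * eps <= mu x y) && (mu x y <= tau + 2 * eps).

Section NetGraphs.
Variables (R : realType) (Om : Type) (mu : Om -> Om -> R) (tau eps : R).
Variables (N : seq Om) (x0 : Om) (n : nat).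
Hypotheses (mu_metric : is_metric mu) (N_net : is_eps_net mu eps N).

Definition net_graphs : {set {set {set 'I_n}}} :=
  [set rgg_graph mu tau (fun i => nth x0 N (f i)) | f : {ffun 'I_n -> 'I_(size N)}].

Lemma card_net_graphs : (#|net_graphs| <= size N ^ n)%N.
Proof. by apply: leq_trans (leq_imset_card _ _) _; rewrite card_ffun !card_ord. Qed.

Lemma In_nth_ord (y : Om) (s : seq Om) :
  List.In y s -> exists k : 'I_(size s), nth x0 s k = y.
Proof.
elim: s => [//|a s IH] /= [->|/IH [k <-]]; first by exists ord0.
by exists (lift ord0 k).
Qed.

(* Moving both endpoints by at most [eps] moves [mu] by at most [2 eps], so
   outside the band the edge decision is the same for the nearest net points. *)
Lemma rgg_in_net_graphs (x : 'I_n -> Om) :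
  (forall i j : 'I_n, (i < j)%N -> ~~ in_band mu tau eps (x i) (x j)) ->
  rgg_graph mu tau x \in net_graphs.
Proof.
move=> off_band; case: mu_metric => mu_ge0 _ mu_sym mu_tri.
have /fin_all_exists [f near_f] :
    forall i, exists k : 'I_(size N), mu (x i) (nth x0 N k) <= eps.
  move=> i; have [y [yN xy]] := N_net (x i).
  by have [k ky] := In_nth_ord yN; exists k; rewrite ky.
apply/imsetP; exists (finfun f) => //.
apply/setP => e; rewrite !inE; apply: eq_existsb => i; apply: eq_existsb => j.
rewrite !ffunE; case: ltnP => //= ij; congr (_ && _).
set yi := nth x0 N (f i); set yj := nth x0 N (f j).
have := near_f i; have := near_f j; rewrite -/yi -/yj => xyj xyi; clearbody yi yj.
have eps_ge0 : 0 <= eps by apply: le_trans xyi.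
have le_y : mu yi yj <= mu (x i) (x j) + 2 * eps.
  have := mu_tri yi (x i) yj; have := mu_tri (x i) (x j) yj.
  by rewrite (mu_sym yi (x i)); lra.
have le_x : mu (x i) (x j) <= mu yi yj + 2 * eps.
  have := mu_tri (x i) yi (x j); have := mu_tri yi yj (x j).
  by rewrite (mu_sym yj (x j)); lra.
have := off_band i j ij; rewrite /in_band negb_and -!ltNge.
by case/orP => off; apply/idP/idP => ?; lra.
Qed.

End NetGraphs.

Section FiniteUnions.
Local Open Scope ereal_scope.
Context d (T : measurableType d) (R : realType) (m : {measure set T -> \bar R}).

Lemma measure_big_setU_disjoint (I : eqType) (s : seq I) (F : I -> set T) :
  uniq s -> (forall i, measurable (F i)) ->
  (forall i j, i != j -> F i `&` F j = set0) ->
  m (\big[setU/set0]_(i <- s) F i) = \sum_(i <- s) m (F i).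
Proof.
move=> + mF dF; elim: s => [|a s IH] /=; first by rewrite !big_nil measure0.
move=> /andP[aS us]; rewrite !big_cons -IH // measureU //.
- exact: bigsetU_measurable.
- elim: s aS {IH us} => [|b s IH]; first by rewrite big_nil setI0.
  by rewrite inE negb_or big_cons setIUr => /andP[ab /IH->]; rewrite dF // setU0.
Qed.

Lemma measure_big_setU_le (I : Type) (s : seq I) (Q : pred I) (F : I -> set T) :
  (forall i, measurable (F i)) ->
  m (\big[setU/set0]_(i <- s | Q i) F i) <= \sum_(i <- s | Q i) m (F i).
Proof.
move=> mF; elim: s => [|a s IH]; first by rewrite !big_nil measure0.
rewrite !big_cons; case: ifP => // _.
apply: le_trans (measureU2 _ _ _) (leeD2l _ IH) => //.
exact: bigsetU_measurable.
Qed.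

End FiniteUnions.

Section IidSample.
Context d d' (T : measurableType d) (Om : measurableType d') (R : realType)
  (P : probability T R) (D : probability Om R) (n : nat) (X : 'I_n -> T -> Om).
Hypothesis X_iid : iid_sample P D X.

Lemma iid_sample_measurable i : measurable_fun setT (X i).
Proof. by case: X_iid. Qed.

Lemma iid_sample_pair_measurable i j :
  measurable_fun setT (fun t => (X i t, X j t)).
Proof. by apply: measurable_fun_pair; apply: iid_sample_measurable. Qed.

Lemma iid_sample_pair_rect i j (A B : set Om) :
  i != j -> measurable A -> measurable B ->
  P ((fun t => (X i t, X j t)) @^-1` (A `*` B)) = (D A * D B)%E.
Proof.
move=> ij mA mB; case: X_iid => _ lawX indepX.
pose F k := if k == i then A else if k == j then B else setT.
have mF k : measurable (F k) by rewrite /F; case: ifP => // _; case: ifP.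
have := indepX F mF.
have -> : \bigcap_(k in [set: 'I_n]) (X k @^-1` F k)
          = (fun t => (X i t, X j t)) @^-1` (A `*` B).
  apply/seteqP; split => t /=.
    move=> h; split; first by move: (h i I); rewrite /F eqxx.
    by move: (h j I); rewrite /F eq_sym (negbTE ij) eqxx.
  move=> [tA tB] k _; rewrite /F.
  by case: ifP => [/eqP -> //|_]; case: ifP => [/eqP -> //|].
move=> ->; rewrite (bigD1 i) //= (bigD1 j) 1?eq_sym //= big1 ?mulr1; last first.
  move=> k /andP[ki kj].
  by rewrite /F (negbTE ki) (negbTE kj) preimage_setT probability_setT.
by rewrite /F eqxx eq_sym (negbTE ij) eqxx !lawX // EFinM !fineK ?fin_num_measure.
Qed.

Lemma iid_sample_pair_law i j (Z : set (Om * Om)) : i != j -> measurable Z ->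
  P ((fun t => (X i t, X j t)) @^-1` Z) = (D \x D)%E Z.
Proof.
move=> ij mZ; have := iid_sample_pair_measurable i j => mf.
rewrite (@product_measure_unique _ _ Om Om R D D
  (pushforward P (fun t => (X i t, X j t)))) //.
by move=> A B mA mB; exact: iid_sample_pair_rect.
Qed.

End IidSample.

Section RandomGeometricGraph.
Context d d' (T : measurableType d) (Om : measurableType d') (R : realType)
  (P : probability T R) (D : probability Om R) (n : nat) (X : 'I_n -> T -> Om).
Hypothesis X_iid : iid_sample P D X.
Variables (mu : Om -> Om -> R) (tau : R).
Hypothesis mu_measurable : measurable_dist mu.

Let rgg t := rgg_graph mu tau (fun i => X i t).

(* Measurability of the graph is reduced to that of its finitely many edge
   events. *)
Definition edge_pattern t : {ffun 'I_n * 'I_n -> bool} :=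
  [ffun ij => mu (X ij.1 t) (X ij.2 t) <= tau].

Definition graph_of_pattern (b : {ffun 'I_n * 'I_n -> bool}) : {set {set 'I_n}} :=
  [set e : {set 'I_n} | [exists i : 'I_n, exists j : 'I_n,
     [&& (i < j)%N, e == [set i; j]%SET & b (i, j)]]]%SET.

Lemma rgg_graph_pattern t : rgg t = graph_of_pattern (edge_pattern t).
Proof.
apply/setP => e; rewrite !inE; apply: eq_existsb => i; apply: eq_existsb => j.
by rewrite ffunE.
Qed.

Lemma measurable_dist_itv (i j : 'I_n) (I : interval R) :
  measurable [set t | mu (X i t) (X j t) \in I].
Proof.
have := iid_sample_pair_measurable X_iid i j measurableT.
by move=> /(_ _ (mu_measurable measurableT (measurable_itv I))); rewrite !setTI.
Qed.

Lemma measurable_edge_pattern (Q : pred {ffun 'I_n * 'I_n -> bool}) :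
  measurable [set t | Q (edge_pattern t)].
Proof.
have pattern_eq b : measurable [set t | edge_pattern t = b].
  have -> : [set t | edge_pattern t = b] = \bigcap_(ij in [set: 'I_n * 'I_n])
       [set t | (mu (X ij.1 t) (X ij.2 t) <= tau) = b ij].
    apply/seteqP; split => t /=; first by move=> <- ij _; rewrite ffunE.
    by move=> h; apply/ffunP => ij; rewrite ffunE; exact: h ij I.
  apply: fin_bigcap_measurable; first exact: finite_finset.
  move=> [i j] _; have := measurable_dist_itv i j `]-oo, tau].
  case: (b (i, j)) => [|/measurableC]; congr measurable;
    by apply/seteqP; split => t /=; rewrite in_itv /=; case: (_ <= _).
have -> : [set t | Q (edge_pattern t)] =
          \bigcup_(b in [set b | Q b]) [set t | edge_pattern t = b].
  apply/seteqP; split => t /=; first by move=> h; exists (edge_pattern t).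
  by move=> [b /= Qb ->].
by apply: fin_bigcup_measurable; first exact: finite_finset.
Qed.

Lemma measurable_rgg_in (A : pred {set {set 'I_n}}) : measurable [set t | rgg t \in A].
Proof.
have := measurable_edge_pattern (fun b => graph_of_pattern b \in A).
by congr measurable; apply/seteqP; split => t /=; rewrite rgg_graph_pattern.
Qed.

Lemma sum_rgg_pmf (A : {set {set {set 'I_n}}}) :
  \sum_(g in A) rgg_pmf P mu tau X g = fine (P [set t | rgg t \in A]).
Proof.
have graph_eq (g : {set {set 'I_n}}) : measurable [set t | rgg t = g].
  by have := measurable_rgg_in (pred1 g); congr measurable; apply/seteqP;
     split => t /= /eqP.
rewrite /rgg_pmf -big_enum /= sum_fine; last by move=> g _; apply: fin_num_measure.
rewrite -measure_big_setU_disjoint ?enum_uniq //; last first.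
  move=> g h gh; apply/seteqP; split => t //= [tg th].
  by move: gh; rewrite -tg -th eqxx.
congr (fine (P _)); rewrite -bigcup_seq; apply/seteqP; split => t /=.
  by move=> [g /=]; rewrite mem_enum /rgg => gA ->.
by move=> tA; exists (rgg t) => //=; rewrite mem_enum.
Qed.

Lemma rgg_pmf_ge0 g : 0 <= rgg_pmf P mu tau X g.
Proof. exact: fine_ge0. Qed.

Lemma rgg_pmf_sum1 : \sum_(g : {set {set 'I_n}}) rgg_pmf P mu tau X g = 1.
Proof.
have := sum_rgg_pmf [set: {set {set 'I_n}}]%SET.
rewrite (_ : [set t | _] = setT) ?probability_setT.
  by move=> /= <-; apply: eq_bigl => g; rewrite !inE.
by apply/seteqP; split => t //= _; rewrite !inE.
Qed.

(* Union bound over the [< n^2] pairs, each in the band with probability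
   [band_prob]. *)
Lemma rgg_mass_ge (eps : R) (S : {set {set {set 'I_n}}}) :
  (forall t, (forall i j : 'I_n, (i < j)%N -> ~~ in_band mu tau eps (X i t) (X j t)) ->
     rgg t \in S) ->
  1 - n%:R ^+ 2 * band_prob D mu tau eps <= \sum_(g in S) rgg_pmf P mu tau X g.
Proof.
move=> good_in_S.
pose Band (ij : 'I_n * 'I_n) := [set t | in_band mu tau eps (X ij.1 t) (X ij.2 t)].
have mBand ij : measurable (Band ij).
  by have := measurable_dist_itv ij.1 ij.2 `[tau - 2 * eps, tau + 2 * eps];
     congr measurable; apply/seteqP; split => t /=; rewrite in_itv.
pose Bad := \big[setU/set0]_(ij : 'I_n * 'I_n | (ij.1 < ij.2)%N) Band ij.
have mBad : measurable Bad by apply: bigsetU_measurable.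
have band_ge0 : 0 <= band_prob D mu tau eps by apply: fine_ge0.
have PBand (ij : 'I_n * 'I_n) :
    (ij.1 < ij.2)%N -> fine (P (Band ij)) = band_prob D mu tau eps.
  have mZ : measurable [set z : Om * Om | in_band mu tau eps z.1 z.2].
    have := mu_measurable measurableT (measurable_itv `[tau - 2 * eps, tau + 2 * eps]).
    by rewrite setTI; congr measurable; apply/seteqP; split => z /=; rewrite in_itv.
  move=> lt; have ij_neq : ij.1 != ij.2 by rewrite neq_ltn lt.
  by rewrite /band_prob -(iid_sample_pair_law X_iid ij_neq mZ).
have PBad : fine (P Bad) <= n%:R ^+ 2 * band_prob D mu tau eps.
  apply: le_trans
    (_ : \sum_(ij : 'I_n * 'I_n | (ij.1 < ij.2)%N) fine (P (Band ij)) <= _).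
    rewrite sum_fine; last by move=> ij _; apply: fin_num_measure.
    apply: fine_le; [exact: fin_num_measure| |exact: measure_big_setU_le].
    by rewrite -EFin_sum_fine // => ij _; apply: fin_num_measure.
  rewrite (eq_bigr (fun _ => band_prob D mu tau eps)); last by move=> ij /PBand.
  apply: le_trans (_ : \sum_(ij : 'I_n * 'I_n) band_prob D mu tau eps <= _).
    rewrite [leRHS](bigID (fun ij : 'I_n * 'I_n => (ij.1 < ij.2)%N)) /=.
    by rewrite lerDl sumr_ge0.
  by rewrite sumr_const card_prod card_ord -[_ *+ _]mulr_natl natrM expr2.
have Bad_sub : ~` Bad `<=` [set t | rgg t \in S].
  move=> t /= nBad; apply: good_in_S => i j ij; apply/negP => tband; apply: nBad.
  by rewrite /Bad -bigcup_seq_cond; exists (i, j) => //=; rewrite mem_index_enum.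
rewrite sum_rgg_pmf; apply: le_trans (_ : fine (P (~` Bad)) <= _).
  by rewrite probability_setC // fineB ?fin_num_measure //=; lra.
have mGood : measurable [set t | rgg t \in S] by exact: measurable_rgg_in.
apply: fine_le; rewrite ?fin_num_measure //; first exact: measurableC.
by apply: le_measure; rewrite ?inE //; exact: measurableC.
Qed.

End RandomGeometricGraph.

Lemma sqrn_le_4bin2 n : (2 <= n)%N -> (n ^ 2 <= 4 * 'C(n, 2))%N.
Proof.
move=> n_ge2; have := mul_bin_diag n 1; rewrite bin1 => bin2E.
have -> : (4 * 'C(n, 2) = 2 * (2 * 'C(n, 2)))%N by lia.
by rewrite -bin2E; nia.
Qed.

Lemma rgg_gnp_TV_ge d d' (T : measurableType d) (Om : measurableType d') (R : realType)
    (mu : Om -> Om -> R) (D : probability Om R) (tau eps : R) (N : seq Om)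
    (P : probability T R) (n : nat) (X : 'I_n -> T -> Om) :
  is_metric mu -> measurable_dist mu -> is_eps_net mu eps N -> iid_sample P D X ->
  (2 <= n)%N -> n%:R^-1 <= edge_prob D mu tau <= 2^-1 ->
  (size N)%:R <= expR (32^-1 * n%:R * edge_prob D mu tau
                       * ln (edge_prob D mu tau)^-1) ->
  1 - (n%:R ^+ 2 * band_prob D mu tau eps + 80 / n%:R)
    <= TV (rgg_pmf P mu tau X) (gnp_pmf n (edge_prob D mu tau)) <= 1.
Proof.
move=> mu_metric mu_meas N_net X_iid n_ge2 /andP[p_ge p_le] N_small.
set p := edge_prob D mu tau in p_ge p_le N_small *.
have x_ge2 : 2 <= n%:R :> R by rewrite (ler_nat R 2).
have p_gt0 : 0 < p by apply: lt_le_trans p_ge; rewrite invr_gt0; lra.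
have p_unit : 0 <= p <= 1 by move: p_gt0 p_le; lra.
pose S := net_graphs mu tau N point n.
have rgg_S :
    1 - n%:R ^+ 2 * band_prob D mu tau eps <= \sum_(g in S) rgg_pmf P mu tau X g.
  by apply: (rgg_mass_ge X_iid mu_meas) => t; apply: rgg_in_net_graphs.
have card_S : #|S|%:R <= expR (n%:R * (32^-1 * n%:R * p * ln p^-1)) :> R.
  apply: le_trans (_ : (size N)%:R ^+ n <= _).
    by rewrite -natrX ler_nat card_net_graphs.
  by rewrite expRM_natl lerXn2r ?nnegrE ?expR_ge0.
have x2_le_M : n%:R ^+ 2 <= 4 * 'C(n, 2)%:R :> R.
  by rewrite -natrX -natrM ler_nat sqrn_le_4bin2.
have gnp_S : \sum_(g in S) gnp_pmf n p g <= 80 / n%:R.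
  apply: le_trans (gnp_set_le p_gt0 p_le ('C(n, 2)%:R * p / 4) S) _.
  have := heavy_graphs_bound x_ge2 x2_le_M p_ge p_le (ler0n _ _) card_S.
  have := light_graphs_bound x_ge2 x2_le_M p_ge p_le; lra.
have rgg_sum1 := rgg_pmf_sum1 X_iid tau mu_meas.
have TV_le1 := half_l1_le1 (@rgg_pmf_ge0 _ _ _ _ _ P n X mu tau)
  (fun g => gnp_pmf_ge0 g p_unit) rgg_sum1 (gnp_pmf_sum1 n p).
have := sum_setD_le_half_l1 rgg_sum1 (gnp_pmf_sum1 n p) S.
by rewrite /TV; lra.
Qed.

Lemma cvg_inv_natr (R : realType) : (n%:R : R)^-1 @[n --> \oo] --> 0.
Proof.
apply/gtr0_cvgV0; last exact: cvgr_idn.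
by near=> n; rewrite ltr0n; near: n; exact: nbhs_infty_gt.
Unshelve. all: end_near. Qed.

Notation R := Rdefinitions.R (only parsing).

Theorem mainTheorem20 :
  exists C : R, 0 < C /\
  forall (dO : nat -> measure_display) (Om : forall n, measurableType (dO n))
    (mu : forall n, Om n -> Om n -> R) (D : forall n, probability (Om n) R)
    (tau eps : nat -> R) (N : forall n, seq (Om n)),
  (forall n, is_metric (mu n)) ->
  (forall n, measurable_dist (mu n)) ->
  (forall n, 0 <= tau n) ->
  (forall n, is_eps_net (mu n) (eps n) (N n)) ->
  (\forall n \near \oo, n%:R^-1 <= edge_prob (D n) (mu n) (tau n)
                        <= 2^-1) ->
  ((fun n => n%:R ^+ 2 * band_prob (D n) (mu n) (tau n) (eps n)) @ \oo --> (0 : R)) ->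
  (\forall n \near \oo,
      (size (N n))%:R <= expR (C * n%:R * edge_prob (D n) (mu n) (tau n)
                                * ln (edge_prob (D n) (mu n) (tau n))^-1)) ->
  forall (dT : nat -> measure_display) (T : forall n, measurableType (dT n))
    (P : forall n, probability (T n) R) (X : forall n, 'I_n -> T n -> Om n),
  (forall n, iid_sample (P n) (D n) (X n)) ->
  (fun n => TV (rgg_pmf (P n) (mu n) (tau n) (X n))
               (gnp_pmf n (edge_prob (D n) (mu n) (tau n)))) @ \oo --> (1 : R).
Proof.
exists 32^-1; split; first by rewrite invr_gt0 ltr0n.
move=> dO Om mu D tau eps N mu_metric mu_meas _ N_net p_bounds band_small N_small.
move=> dT T P X X_iid.
have error_cvg0 : (fun n => n%:R ^+ 2 * band_prob (D n) (mu n) (tau n) (eps n)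
                            + 80 / n%:R) @ \oo --> (0 : R).
  rewrite -[0]addr0; apply: cvgD band_small _.
  by rewrite -(mulr0 80); apply: cvgM; [exact: cvg_cst | exact: cvg_inv_natr].
apply: (squeeze_cvgr _ _ (cvg_cst (1 : R))); last first.
  by rewrite -[1]subr0; apply: cvgB (cvg_cst _) error_cvg0.
near=> n; apply: rgg_gnp_TV_ge => //; near: n.
- exact: nbhs_infty_ge.
- exact: p_bounds.
- exact: N_small.
Unshelve. all: end_near.
Qed.
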